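(* Assume the penalty $g$ satisfies A1–A4. Then for every $X=[x_1,\dots,x_n]\in\mathbb{R}^{m\times n}$ and every $D\in\mathbb{R}^{m\times d}$, with the norm $\|\cdot\|=\|\cdot\|_{1\to2}$, $$L_X(D)\le\frac1n\sum_{i=1}^n\|x_i\|_2\,\bar g\big(\tfrac12\|x_i\|_2^2\big)=L_X(\bar g),\qquad C_X(D)\le\frac1{2n}\sum_{i=1}^n\big[\bar g(\|x_i\|_2^2/2)\big]^2.$$
   Context: A penalty is a function $g:\mathbb{R}^d\to\mathbb{R}\cup\{+\infty\}$. A1: $g\ge0$; A2: $g$ lower semi-continuous; A3: $g(\alpha)\to+\infty$ as $\|\alpha\|\to\infty$; A4: $g(0)=0$. $\bar g(t)=\sup\{\|\alpha\|_1:\ g(\alpha)\le t\}$. $\mathcal{L}_x(D,\alpha)=\tfrac12\|x-D\alpha\|_2^2+g(\alpha)$, $f_x(D)=\inf_\alpha\mathcal{L}_x(D,\alpha)$. $\|\Delta\|_{1\to2}=\max_j\|\delta_j\|_2$ with dual norm $\|\cdot\|_\star$ (w.r.t. Frobenius inner product). For $\epsilon>0$, $\mathfrak{A}_\epsilon(X,D)=\{A=[\alpha_1,\dots,\alpha_n]:\ \mathcal{L}_{x_i}(D,\alpha_i)\le f_{x_i}(D)+\epsilon\ \forall i\}$; $L_X(D)=\inf_{\epsilon>0}\sup_{A\in\mathfrak{A}_\epsilon(X,D)}\frac1n\|(X-DA)A^\top\|_\star$, $C_X(D)=\inf_{\epsilon>0}\sup_{A\in\mathfrak{A}_\epsilon(X,D)}\frac1{2n}\sum_i\|\alpha_i\|_1^2$.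 *)

From Stdlib Require Import Reals ClassicalEpsilon.
From mathcomp Require Import all_boot.
Set Implicit Arguments. Unset Strict Implicit. Unset Printing Implicit Defensive.
Open Scope R_scope.

Inductive ER := Fin (r : R) | PInf | MInf.

Definition ER_le (a b : ER) : Prop :=
  match a, b with
  | MInf, _ => True
  | _, PInf => True
  | Fin x, Fin y => x <= y
  | _, _ => False
  end.
Definition ER_lt (a b : ER) : Prop := ~ ER_le b a.

Definition ER_add (a b : ER) : ER :=
  match a, b with
  | Fin x, Fin y => Fin (x + y)
  | PInf, _ | _, PInf => PInf
  | _, _ => MInf
  end.

(* scaling by a real c >= 0, with the convention 0 * (+-oo) = 0 *)
Definition ER_scale (c : R) (y : ER) : ER :=
  match y with
  | Fin r => Fin (c * r)
  | PInf => if Req_dec_T c 0 then Fin 0 else PInf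
  | MInf => if Req_dec_T c 0 then Fin 0 else MInf
  end.

Definition ER_sq (y : ER) : ER :=
  match y with Fin r => Fin (r * r) | _ => PInf end.

Definition ER_sum (n : nat) (F : 'I_n -> ER) : ER := \big[ER_add/Fin 0]_(i < n) F i.

Definition is_lubE (P : ER -> Prop) (s : ER) : Prop :=
  (forall y, P y -> ER_le y s) /\ (forall b, (forall y, P y -> ER_le y b) -> ER_le s b).
Definition is_glbE (P : ER -> Prop) (s : ER) : Prop :=
  (forall y, P y -> ER_le s y) /\ (forall b, (forall y, P y -> ER_le b y) -> ER_le b s).
Definition SupE (P : ER -> Prop) : ER := epsilon (inhabits MInf) (is_lubE P).
Definition InfE (P : ER -> Prop) : ER := epsilon (inhabits PInf) (is_glbE P).

Definition vec (k : nat) := 'I_k -> R.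
Definition mat (p q : nat) := 'I_p -> 'I_q -> R.

Definition sumR (k : nat) (F : 'I_k -> R) : R := \big[Rplus/0]_(i < k) F i.
Definition norm1 (k : nat) (a : vec k) : R := sumR (fun i => Rabs (a i)).
Definition norm2 (k : nat) (a : vec k) : R := sqrt (sumR (fun i => a i * a i)).
Definition mulmv (p q : nat) (D : mat p q) (a : vec q) : vec p :=
  fun r => sumR (fun j => D r j * a j).
Definition subv (k : nat) (a b : vec k) : vec k := fun i => a i - b i.

Definition penA1 (d : nat) (g : vec d -> ER) : Prop := forall a, ER_le (Fin 0) (g a).
(* lower semi-continuity: for every real t < g(a), g > t on a neighbourhood of a *)
Definition penA2 (d : nat) (g : vec d -> ER) : Prop :=
  forall (a : vec d) (t : R), ER_lt (Fin t) (g a) ->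
    exists delta, 0 < delta /\
      forall b : vec d, norm1 (subv b a) < delta -> ER_lt (Fin t) (g b).
(* coercivity: g(a) -> +oo as ||a|| -> oo *)
Definition penA3 (d : nat) (g : vec d -> ER) : Prop :=
  forall M : R, exists r : R, forall a : vec d, r < norm1 a -> ER_lt (Fin M) (g a).
Definition penA4 (d : nat) (g : vec d -> ER) : Prop := g (fun _ => 0) = Fin 0.

Definition gbar (d : nat) (g : vec d -> ER) (t : R) : ER :=
  SupE (fun y => exists a : vec d, ER_le (g a) (Fin t) /\ y = Fin (norm1 a)).

Definition Lx (m d : nat) (g : vec d -> ER) (x : vec m) (D : mat m d) (a : vec d) : ER :=
  ER_add (Fin (/ 2 * (norm2 (subv x (mulmv D a))) ^ 2)) (g a).
Definition fx (m d : nat) (g : vec d -> ER) (x : vec m) (D : mat m d) : ER :=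
  InfE (fun y => exists a : vec d, y = Lx g x D a).

(** X = [x_1..x_n] (columns X i), A = [a_1..a_n] (columns A i). A \in frakA_eps(X,D). *)
Definition inA (m d n : nat) (g : vec d -> ER) (eps : R) (X : 'I_n -> vec m)
  (D : mat m d) (A : 'I_n -> vec d) : Prop :=
  forall i, ER_le (Lx g (X i) D (A i)) (ER_add (fx g (X i) D) (Fin eps)).

Definition resid (m d n : nat) (X : 'I_n -> vec m) (D : mat m d) (A : 'I_n -> vec d)
  : mat m d :=
  fun r j => sumR (fun i => (X i r - mulmv D (A i) r) * A i j).

Definition frob (p q : nat) (M N : mat p q) : R := sumR (fun r => sumR (fun j => M r j * N r j)).
Definition norm12 (p q : nat) (N : mat p q) : R :=
  \big[Rmax/0]_(j < q) norm2 (fun r => N r j).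
Definition dualnorm12 (p q : nat) (M : mat p q) : ER :=
  SupE (fun y => exists N : mat p q, norm12 N <= 1 /\ y = Fin (frob M N)).

Definition LX (m d n : nat) (g : vec d -> ER) (X : 'I_n -> vec m) (D : mat m d) : ER :=
  InfE (fun y => exists eps, 0 < eps /\
    y = SupE (fun z => exists A, inA g eps X D A /\
                 z = ER_scale (/ INR n) (dualnorm12 (resid X D A)))).
Definition CX (m d n : nat) (g : vec d -> ER) (X : 'I_n -> vec m) (D : mat m d) : ER :=
  InfE (fun y => exists eps, 0 < eps /\
    y = SupE (fun z => exists A, inA g eps X D A /\
                 z = Fin (/ (2 * INR n) * sumR (fun i => (norm1 (A i)) ^ 2)))).

(* Write t_i = ||x_i||^2 / 2 and G_i = gbar(t_i).  Taking the code 0 (A4)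
   shows f_{x_i}(D) <= t_i, so an eps-optimal code a_i has penalty at most
   t_i + eps (A1) and residual ||x_i - D a_i||_2 <= ||x_i||_2 + sqrt(2 eps).
   The analytic core is that the sublevel sets {g <= t} are bounded (A3) and
   that their l1 radius is right-continuous in t: for every delta > 0 there is
   eps > 0 with ||a||_1 <= G_i + delta whenever g(a) <= t_i + eps.  This is
   proved by contradiction, extracting a convergent subsequence of
   counterexamples (Bolzano-Weierstrass in R^d) whose limit lies in {g <= t_i}
   by lower semicontinuity (A2).  Finally the dual norm of (X - DA)A^T is at
   most sum_i ||x_i - D a_i||_2 ||a_i||_1 (Cauchy-Schwarz), so both quantities
   are, for eps small, within any e > 0 of the claimed bounds. *)

From HB Require Import structures.
From Stdlib Require Import Reals Lra Lia ClassicalEpsilon Classical.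
From Stdlib Require Import IndefiniteDescription FunctionalExtensionality.
From mathcomp Require Import all_boot zify.
Set Implicit Arguments. Unset Strict Implicit.
Open Scope R_scope.

(* Addition and multiplication on R as monoid laws, so that the generic
   bigop lemmas (splitting, distributivity, exchange) apply to [sumR]. *)
HB.instance Definition _ := Monoid.isComLaw.Build R 0 Rplus
  (fun a b c => esym (Rplus_assoc a b c)) Rplus_comm Rplus_0_l.
HB.instance Definition _ := Monoid.isMulLaw.Build R 0 Rmult Rmult_0_l Rmult_0_r.
HB.instance Definition _ := Monoid.isAddLaw.Build R Rmult Rplus
  Rmult_plus_distr_r Rmult_plus_distr_l.

Lemma sumR_ext k (f g : 'I_k -> R) : (forall i, f i = g i) -> sumR f = sumR g.
Proof. by move=> fg; apply: eq_bigr. Qed.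

Lemma sumR_add k (f g : 'I_k -> R) : sumR (fun i => f i + g i) = sumR f + sumR g.
Proof. exact: big_split. Qed.

Lemma sumR_scale k c (f : 'I_k -> R) : c * sumR f = sumR (fun i => c * f i).
Proof. exact: big_distrr. Qed.

Lemma sumR_exchange p q (F : 'I_p -> 'I_q -> R) :
  sumR (fun i => sumR (fun j => F i j)) = sumR (fun j => sumR (fun i => F i j)).
Proof. exact: exchange_big. Qed.

Lemma sumR_const k c : sumR (fun _ : 'I_k => c) = INR k * c.
Proof.
rewrite /sumR big_const_ord; elim: k => [|k IH] /=; first lra.
rewrite IH; change (c + INR k * c = INR (S k) * c); rewrite S_INR; lra.
Qed.

Lemma sumR_le k (f g : 'I_k -> R) : (forall i, f i <= g i) -> sumR f <= sumR g.
Proof. by move=> fg; apply: (big_ind2 (fun x y => x <= y)) => // *; lra. Qed.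

Lemma sumR_ge0 k (f : 'I_k -> R) : (forall i, 0 <= f i) -> 0 <= sumR f.
Proof. by move=> f0; apply: (big_ind (fun x => 0 <= x)) => // *; lra. Qed.

Lemma term_le_sumR k (f : 'I_k -> R) j : (forall i, 0 <= f i) -> f j <= sumR f.
Proof.
move=> f0; rewrite /sumR (bigD1 j) //=.
have : 0 <= \big[Rplus/0]_(i < k | i != j) f i.
  by apply: (big_ind (fun x => 0 <= x)) => // *; lra.
by move=> rest0; rewrite -{1}(Rplus_0_r (f j)); apply: Rplus_le_compat_l.
Qed.

Lemma norm1_ge0 k (a : vec k) : 0 <= norm1 a.
Proof. by apply: sumR_ge0 => i; apply: Rabs_pos. Qed.

Lemma norm2_ge0 k (a : vec k) : 0 <= norm2 a.
Proof. exact: sqrt_pos. Qed.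

Lemma abs_le_norm1 k (a : vec k) j : Rabs (a j) <= norm1 a.
Proof. by apply: (term_le_sumR (f := fun i => Rabs (a i))) => i; apply: Rabs_pos. Qed.

Lemma norm1_triangle k (a b : vec k) : norm1 a <= norm1 b + norm1 (subv a b).
Proof.
rewrite /norm1 -sumR_add; apply: sumR_le => i; rewrite /subv.
by have := Rabs_triang (b i) (a i - b i); rewrite Rplus_minus.
Qed.

Lemma norm1_zero k : norm1 (fun _ : 'I_k => 0) = 0.
Proof. by rewrite /norm1 (sumR_ext (g := fun _ => 0)) ?sumR_const ?Rmult_0_r // => i; apply: Rabs_R0. Qed.

(* Cauchy–Schwarz inequality, by the discriminant of the nonnegative quadratic
   [l |-> sum (l a_i + b_i)^2]. *)
Lemma cauchy_schwarz k (a b : vec k) :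
  Rabs (sumR (fun i => a i * b i)) <= norm2 a * norm2 b.
Proof.
set A := sumR (fun i => a i * a i); set B := sumR (fun i => b i * b i).
set C := sumR (fun i => a i * b i).
have A0 : 0 <= A by apply: sumR_ge0 => i; apply: Rle_0_sqr.
have B0 : 0 <= B by apply: sumR_ge0 => i; apply: Rle_0_sqr.
have quad0 l : 0 <= l * l * A + 2 * l * C + B.
  have -> : l * l * A + 2 * l * C + B = sumR (fun i => (l * a i + b i) * (l * a i + b i)).
    rewrite (sumR_ext (g := fun i => l * l * (a i * a i) + (2 * l * (a i * b i) + b i * b i)));
      last by move=> i; ring.
    by rewrite !sumR_add -!sumR_scale /A /B /C; ring.
  by apply: sumR_ge0 => i; apply: Rle_0_sqr.
have CAB : C * C <= A * B.
  have [A_eq0 | A_neq0] := Req_dec A 0.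
    have [C_eq0 | C_neq0] := Req_dec C 0; first by rewrite C_eq0; nra.
    have := quad0 (- (B + 1) / (2 * C)); rewrite A_eq0.
    have -> : 2 * (- (B + 1) / (2 * C)) * C = - (B + 1) by field.
    lra.
  have := quad0 (- C / A); have : (- C / A) * A = - C by field.
  nra.
rewrite -sqrt_Rsqr_abs /norm2 -/A -/B -sqrt_mult_alt //.
exact: sqrt_le_1_alt.
Qed.

Lemma rel_term_big q (op : R -> R -> R) x0 (rel : R -> R -> Prop) (F : 'I_q -> R) j :
  (forall a b, rel a (op a b)) -> (forall a b c, rel a b -> rel a (op c b)) ->
  rel (F j) (\big[op/x0]_(i < q) F i).
Proof.
move=> rel_op_l rel_op_r; rewrite /index_enum.
have : j \in Finite.enum 'I_q by rewrite -enumT mem_enum.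
elim: (Finite.enum _) => [|x s IH] //; rewrite in_cons big_cons.
by case/orP => [/eqP -> | j_s]; [apply: rel_op_l | apply/rel_op_r/IH].
Qed.

(* Every subset of the extended reals has a supremum: by completeness of R
   when its finite part is nonempty and bounded above, and +oo or -oo otherwise. *)
Lemma lubE_exists (P : ER -> Prop) : exists s, is_lubE P s.
Proof.
have top_lub : (forall b, (forall y, P y -> ER_le y b) -> ER_le PInf b) -> exists s, is_lubE P s.
  by move=> H; exists PInf; split; [case | exact: H].
have [P_inf | P_noinf] := classic (P PInf).
  by apply: top_lub => b Hb; apply: Hb.
have [[r0 P_r0] | P_nofin] := classic (exists r, P (Fin r)).
- have [bnd | unbnd] := classic (bound (fun r => P (Fin r))).
  + have [l [l_ub l_least]] := completeness _ bnd (ex_intro _ r0 P_r0).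
    exists (Fin l); split.
    * by case=> [r||] //= Pr; apply: l_ub.
    * case=> [b||] //= Hb; last exact: Hb _ P_r0.
      by apply: l_least => r Pr; apply: (Hb _ Pr).
  + apply: top_lub; case=> [b||] //= Hb; last exact: Hb _ P_r0.
    by apply: unbnd; exists b => r Pr; apply: (Hb _ Pr).
- exists MInf; split; last by case.
  by case=> [r||] //= Pr; apply: P_nofin; exists r.
Qed.

(* The infimum is the supremum of the set of lower bounds. *)
Lemma glbE_exists (P : ER -> Prop) : exists s, is_glbE P s.
Proof.
have [s [s_ub s_least]] := lubE_exists (fun b => forall y, P y -> ER_le b y).
by exists s; split => [y Py | b Hb]; [apply: s_least => b Hb; apply: Hb | apply: s_ub].
Qed.

Lemma SupE_le (P : ER -> Prop) b : (forall y, P y -> ER_le y b) -> ER_le (SupE P) b.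
Proof. exact: (proj2 (epsilon_spec (inhabits MInf) _ (lubE_exists P))). Qed.

Lemma le_SupE {P : ER -> Prop} {y : ER} : P y -> ER_le y (SupE P).
Proof. exact: (proj1 (epsilon_spec (inhabits MInf) _ (lubE_exists P))). Qed.

Lemma InfE_le {P : ER -> Prop} {y : ER} : P y -> ER_le (InfE P) y.
Proof. exact: (proj1 (epsilon_spec (inhabits PInf) _ (glbE_exists P))). Qed.

Lemma InfE_le_approx (P : ER -> Prop) V :
  (forall e, 0 < e -> exists y, P y /\ ER_le y (Fin (V + e))) -> ER_le (InfE P) (Fin V).
Proof.
move=> approx; case E: (InfE P) => [s||] //=.
- apply: Rnot_lt_le => Vs.
  have [y [Py y_le]] := approx ((s - V) / 2) ltac:(lra).
  by have := InfE_le Py; rewrite E; case: y {Py} y_le => [r||] //=; lra.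
- have [y [Py y_le]] := approx 1 Rlt_0_1.
  by have := InfE_le Py; rewrite E; case: y {Py} y_le.
Qed.

(* The shape of [L_X] and [C_X]: an infimum over [eps > 0] of suprema. *)
Lemma InfE_SupE_le (F : R -> ER -> Prop) V :
  (forall e, 0 < e -> exists eps, 0 < eps /\ forall z, F eps z -> ER_le z (Fin (V + e))) ->
  ER_le (InfE (fun y => exists eps, 0 < eps /\ y = SupE (F eps))) (Fin V).
Proof.
move=> approx; apply: InfE_le_approx => e e0; have [eps [eps0 F_le]] := approx e e0.
by exists (SupE (F eps)); split; [exists eps | apply: SupE_le].
Qed.

Lemma ER_le_Fin_trans y a b : ER_le y (Fin a) -> a <= b -> ER_le y (Fin b).
Proof. by case: y => //= r; lra. Qed.

Lemma ER_sum_Fin n (F : 'I_n -> ER) (f : 'I_n -> R) :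
  (forall i, F i = Fin (f i)) -> ER_sum F = Fin (sumR f).
Proof. by move=> Ff; apply: (big_ind2 (fun x y => x = Fin y)) => // ? ? ? ? -> ->. Qed.

Lemma inv_INR_le k k' : (0 < k)%nat -> (k <= k')%nat -> / INR k' <= / INR k.
Proof.
move=> k0 kk'; apply: Rinv_le_contravar; first by apply: lt_0_INR; lia.
by apply: le_INR; lia.
Qed.

Definition increasing_index (phi : nat -> nat) : Prop := forall k, (phi k < phi (S k))%nat.

Lemma increasing_index_lt phi : increasing_index phi ->
  forall a b, (a < b)%nat -> (phi a < phi b)%nat.
Proof.
move=> inc a; elim=> [|b IH] ab; first lia.
have := inc b; have [-> | ?] := Nat.eq_dec a b; first lia.
have := IH ltac:(lia); lia.
Qed.

Lemma increasing_index_ge phi : increasing_index phi -> forall k, (k <= phi k)%nat.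
Proof. by move=> inc; elim=> [|k IH]; [lia | have := inc k; lia]. Qed.

Lemma increasing_index_comp phi psi : increasing_index phi -> increasing_index psi ->
  increasing_index (fun k => phi (psi k)).
Proof. by move=> inc_phi inc_psi k; apply: increasing_index_lt. Qed.

Lemma Un_cv_subseq u l phi : Un_cv u l -> increasing_index phi ->
  Un_cv (fun k => u (phi k)) l.
Proof.
move=> cv inc e e0; have [N HN] := cv e e0; exists N => k kN; apply: HN.
by have := increasing_index_ge inc k; lia.
Qed.

(* Bolzano–Weierstrass with an explicit convergent subsequence: around the
   adherence value [l] given by Stdlib, the [k]-th chosen index lies beyond the
   previous one and within [1/(k+1)] of [l]. *)
Lemma bounded_subseq_cv (u : nat -> R) r : (forall k, Rabs (u k) <= r) ->
  exists phi, increasing_index phi /\ exists l, Un_cv (fun k => u (phi k)) l.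
Proof.
move=> u_bnd.
have u_in k : - r <= u k <= r by have := u_bnd k; rewrite /Rabs; case: Rcase_abs; lra.
have [l adh] := Bolzano_Weierstrass u _ (compact_P3 (- r) r) u_in.
have inv_pos k : 0 < / INR (S k) by apply/Rinv_0_lt_compat/lt_0_INR; lia.
have close k N : exists p, le N p /\ Rabs (u p - l) < / INR (S k).
  apply: (adh (disc l (mkposreal _ (inv_pos k))) N).
  by exists (mkposreal _ (inv_pos k)) => y.
have [f f_spec] := @functional_choice _ _ (fun kN p => le kN.2 p /\
  Rabs (u p - l) < / INR (S kN.1)) (fun kN => close kN.1 kN.2).
pose phi := fix phi k := f (k, match k with O => O | S k' => S (phi k') end).
exists phi; split.
  by move=> k; have [/= ? _] := f_spec (S k, S (phi k)); lia.
exists l => e e0; have [N [Ne N0]] := archimed_cor1 e e0.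
exists N => k kN; apply: Rlt_trans Ne.
apply: (Rlt_le_trans _ (/ INR (S k))); last by apply: inv_INR_le; lia.
by case: k {kN} => [|k]; apply: (proj2 (f_spec _)).
Qed.

(* Bolzano–Weierstrass in R^d: extract successively along each coordinate. *)
Lemma bounded_subseq_cv_vec d (u : nat -> vec d) r : (forall k j, Rabs (u k j) <= r) ->
  exists phi, increasing_index phi /\
    exists b : vec d, forall j, Un_cv (fun k => u (phi k) j) (b j).
Proof.
move=> u_bnd.
have along (s : seq 'I_d) : exists phi, increasing_index phi /\
    forall j, j \in s -> exists l, Un_cv (fun k => u (phi k) j) l.
  elim: s => [|j s [phi [inc_phi IH]]]; first by exists id; split => // k /=; lia.
  have [psi [inc_psi [l cv_l]]] := bounded_subseq_cv (fun k => u_bnd (phi k) j).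
  exists (fun k => phi (psi k)); split; first exact: increasing_index_comp.
  move=> j'; rewrite in_cons => /orP [/eqP -> | j'_s]; first by exists l.
  have [l' cv_l'] := IH j' j'_s.
  by exists l'; apply: (Un_cv_subseq (u := fun k => u (phi k) j')).
have [phi [inc_phi cv]] := along (enum 'I_d).
have [b cv_b] := @functional_choice _ _ (fun j l => Un_cv (fun k => u (phi k) j) l)
  (fun j => cv j (mem_enum _ j)).
by exists phi; split; last exists b.
Qed.

Lemma Un_cv_norm1 d (w : nat -> vec d) (b : vec d) :
  (forall j, Un_cv (fun k => w k j) (b j)) -> Un_cv (fun k => norm1 (subv (w k) b)) 0.
Proof.
move=> cv; rewrite /norm1 /sumR /subv.
elim: (index_enum _) => [|j s IH].
  apply: (@Un_cv_ext (fun _ => 0)) => [k | e e0]; first by rewrite big_nil.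
  by exists O => k _; rewrite /Rdist Rminus_0_r Rabs_R0.
apply: (@Un_cv_ext (fun k => Rabs (w k j - b j) + \big[Rplus/0]_(i <- s) Rabs (w k i - b i))).
  by move=> k; rewrite big_cons.
have cv_j : Un_cv (fun k => Rabs (w k j - b j)) 0.
  move=> e e0; have [N HN] := cv j e e0; exists N => k kN.
  by rewrite /Rdist Rminus_0_r Rabs_Rabsolu; apply: HN.
by have := CV_plus _ _ _ _ cv_j IH; rewrite Rplus_0_r.
Qed.

Lemma sublevel_bounded d (g : vec d -> ER) : penA3 g -> forall t,
  exists r, forall a, ER_le (g a) (Fin t) -> norm1 a <= r.
Proof.
move=> hA3 t; have [r Hr] := hA3 t; exists r => a ga_t.
by apply: Rnot_lt_le => r_lt; apply: (Hr a r_lt ga_t).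
Qed.

Lemma gbar_bound d (g : vec d -> ER) t G : gbar g t = Fin G ->
  forall a, ER_le (g a) (Fin t) -> norm1 a <= G.
Proof.
move=> gbar_t a ga_t; rewrite -[_ <= _]/(ER_le (Fin (norm1 a)) (Fin G)) -gbar_t.
by apply: le_SupE; exists a.
Qed.

(* Under A3 and A4, [gbar g t] is finite for [t >= 0]: it lies in [[0, r]]
   for any l1 bound [r] of the sublevel set. *)
Lemma gbar_finite d (g : vec d -> ER) : penA3 g -> penA4 g -> forall t, 0 <= t ->
  exists G, gbar g t = Fin G.
Proof.
move=> hA3 hA4 t t0; have [r bnd] := sublevel_bounded hA3 t.
have le_r : ER_le (gbar g t) (Fin r) by apply: SupE_le => _ [a [ga_t ->]]; apply: bnd.
have ge_0 : ER_le (Fin 0) (gbar g t).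
  by apply: le_SupE; exists (fun _ => 0); rewrite hA4 norm1_zero.
by case: (gbar g t) le_r ge_0 => [G||] //= _ _; exists G.
Qed.

Lemma lsc_sublevel_limit d (g : vec d -> ER) : penA2 g ->
  forall (w : nat -> vec d) b t, Un_cv (fun k => norm1 (subv (w k) b)) 0 ->
  (forall k, ER_le (g (w k)) (Fin (t + / INR (S k)))) -> ER_le (g b) (Fin t).
Proof.
move=> hA2 w b t cv w_level; apply: NNPP => gb_gt.
have [t' [t_t' t'_gb]] : exists t', t < t' /\ ER_lt (Fin t') (g b).
  case: (g b) gb_gt => [v||] //= gb_gt.
    by exists ((t + v) / 2); rewrite /ER_lt /=; lra.
  by exists (t + 1); split; [lra | case].
have [delta [delta0 near_gt]] := hA2 b t' t'_gb.
have [N1 HN1] := cv delta delta0.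
have [N2 [N2_small N2_0]] := archimed_cor1 (t' - t) ltac:(lra).
pose k := Nat.max N1 N2.
apply: (near_gt (w k)).
  by have := HN1 k ltac:(lia); rewrite /Rdist Rminus_0_r Rabs_pos_eq //; apply: norm1_ge0.
apply: ER_le_Fin_trans (w_level k) _.
by have := @inv_INR_le N2 (S k) ltac:(lia) ltac:(lia); lra.
Qed.

Lemma norm1_limit_ge d (w : nat -> vec d) b c :
  Un_cv (fun k => norm1 (subv (w k) b)) 0 -> (forall k, c < norm1 (w k)) -> c <= norm1 b.
Proof.
move=> cv c_lt; apply: Rnot_lt_le => b_lt.
have [N HN] := cv (c - norm1 b) ltac:(lra).
have := HN N (le_n N); rewrite /Rdist Rminus_0_r Rabs_pos_eq; last exact: norm1_ge0.
by have := norm1_triangle (w N) b; have := c_lt N; lra.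
Qed.

(* The key consequence of A2 and A3: an l1 bound [G] on the sublevel set at [t]
   persists, up to any [dl > 0], on the sublevel sets at [t + eps] for small
   [eps > 0].  Otherwise counterexamples at levels [t + 1/(k+1)] have, by
   compactness, a limit point in the sublevel set at [t] of norm [>= G + dl]. *)
Lemma sublevel_norm_right_cont d (g : vec d -> ER) : penA2 g -> penA3 g ->
  forall t G, (forall a, ER_le (g a) (Fin t) -> norm1 a <= G) ->
  forall dl, 0 < dl -> exists eps, 0 < eps /\
    forall a, ER_le (g a) (Fin (t + eps)) -> norm1 a <= G + dl.
Proof.
move=> hA2 hA3 t G G_bnd dl dl0; apply: NNPP => no_eps.
have bad k : exists a, ER_le (g a) (Fin (t + / INR (S k))) /\ G + dl < norm1 a.
  apply: NNPP => no_bad; apply: no_eps; exists (/ INR (S k)); split.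
    by apply/Rinv_0_lt_compat/lt_0_INR; lia.
  by move=> a ga; apply: Rnot_lt_le => G_lt; apply: no_bad; exists a.
have [u u_spec] := functional_choice _ bad.
have u_level k k' : (k <= k')%nat -> ER_le (g (u k')) (Fin (t + / INR (S k))).
  by move=> kk'; apply: ER_le_Fin_trans (proj1 (u_spec k')) _; have := @inv_INR_le (S k) (S k') isT kk'; lra.
have [r r_bnd] := sublevel_bounded hA3 (t + 1).
have u_bnd k j : Rabs (u k j) <= r.
  apply: Rle_trans (abs_le_norm1 _ _) (r_bnd _ _).
  by apply: ER_le_Fin_trans (u_level 0%nat k isT) _; rewrite /= Rinv_1; lra.
have [phi [inc_phi [b cv_b]]] := bounded_subseq_cv_vec u_bnd.
have cv := Un_cv_norm1 cv_b.
have gb : ER_le (g b) (Fin t).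
  by apply: (lsc_sublevel_limit hA2 cv) => k; apply: u_level; apply: increasing_index_ge.
have := norm1_limit_ge cv (fun k => proj2 (u_spec (phi k))).
by have := G_bnd b gb; lra.
Qed.

(* Taking [a = 0] (A4): the optimal value is at most [||x||^2 / 2]. *)
Lemma fx_le_half_sqnorm m d (g : vec d -> ER) : penA4 g -> forall (x : vec m) (D : mat m d),
  ER_le (fx g x D) (Fin (/ 2 * norm2 x ^ 2)).
Proof.
move=> hA4 x D.
have resid0 : subv x (mulmv D (fun _ => 0)) = x.
  apply: functional_extensionality => r; rewrite /subv /mulmv.
  by rewrite (sumR_ext (g := fun _ => 0)) ?sumR_const => [|j]; ring.
have := @InfE_le (fun y => exists a, y = Lx g x D a) _ (ex_intro _ (fun _ => 0) erefl).
by rewrite /fx /Lx hA4 resid0 /= Rplus_0_r.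
Qed.

Lemma near_optimal_bounds m d (g : vec d -> ER) : penA1 g -> penA4 g ->
  forall (x : vec m) (D : mat m d) (a : vec d) eps, 0 < eps ->
  ER_le (Lx g x D a) (ER_add (fx g x D) (Fin eps)) ->
  ER_le (g a) (Fin (/ 2 * norm2 x ^ 2 + eps)) /\
  norm2 (subv x (mulmv D a)) <= norm2 x + sqrt (2 * eps).
Proof.
move=> hA1 hA4 x D a eps eps0; have := fx_le_half_sqnorm hA4 x D; have := hA1 a.
rewrite /Lx; case: (fx g x D) => [f||] //=; case: (g a) => [v||] //= v0 f_le.
set q := norm2 _; have q0 : 0 <= q := norm2_ge0 _; have x0 := norm2_ge0 x => opt.
split; first nra.
have s0 := sqrt_pos (2 * eps); have s2 := sqrt_sqrt (2 * eps) ltac:(lra).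
suff : q * q <= (norm2 x + sqrt (2 * eps)) * (norm2 x + sqrt (2 * eps)) by nra.
nra.
Qed.

Lemma frob_resid m d n (X : 'I_n -> vec m) (D : mat m d) (A : 'I_n -> vec d) (N : mat m d) :
  frob (resid X D A) N = sumR (fun i => sumR (fun j =>
    A i j * sumR (fun r => subv (X i) (mulmv D (A i)) r * N r j))).
Proof.
rewrite /frob /resid.
transitivity (sumR (fun r => sumR (fun i => sumR (fun j =>
    A i j * (subv (X i) (mulmv D (A i)) r * N r j))))).
  apply: sumR_ext => r; rewrite -sumR_exchange; apply: sumR_ext => j.
  by rewrite Rmult_comm sumR_scale; apply: sumR_ext => i; rewrite /subv; ring.
rewrite sumR_exchange; apply: sumR_ext => i; rewrite sumR_exchange.
by apply: sumR_ext => j; rewrite sumR_scale.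
Qed.

(* Duality bound: [||(X - D A) A^T||_* <= sum_i ||x_i - D a_i||_2 ||a_i||_1],
   by Cauchy–Schwarz on each column of a test matrix [N] with [||N||_{1->2} <= 1]. *)
Lemma dualnorm12_resid_le m d n (X : 'I_n -> vec m) (D : mat m d) (A : 'I_n -> vec d) :
  ER_le (dualnorm12 (resid X D A))
    (Fin (sumR (fun i => norm2 (subv (X i) (mulmv D (A i))) * norm1 (A i)))).
Proof.
apply: SupE_le => _ [N [N_le1 ->]] /=; rewrite frob_resid.
apply: sumR_le => i; rewrite /norm1 sumR_scale; apply: sumR_le => j.
set res := subv (X i) (mulmv D (A i)).
have col_le1 : norm2 (fun r => N r j) <= 1.
  apply: Rle_trans N_le1; apply: (@rel_term_big _ Rmax 0 Rle (fun j => norm2 (fun r => N r j))).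
    exact: Rmax_l.
  by move=> a b c ab; apply: Rle_trans ab (Rmax_r c b).
set S := sumR _; have cs : Rabs S <= norm2 res * norm2 (fun r => N r j) := cauchy_schwarz _ _.
have col_res : norm2 res * norm2 (fun r => N r j) <= norm2 res.
  by have := norm2_ge0 res; have := norm2_ge0 (fun r => N r j); nra.
have := Rle_abs (A i j * S); rewrite Rabs_mult.
have := Rmult_le_compat_l _ _ _ (Rabs_pos (A i j)) (Rle_trans _ _ _ cs col_res).
lra.
Qed.

Lemma ER_scale_le c y b V : 0 <= c -> ER_le y (Fin b) -> c * b <= V ->
  ER_le (ER_scale c y) (Fin V).
Proof.
move=> c0; case: y => [r||] //= r_b; first by have := Rmult_le_compat_l _ _ _ c0 r_b; lra.
by case: Req_dec_T => //= ->; rewrite Rmult_0_l.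
Qed.

Lemma scale_with_slack c S T e : 0 <= c <= 1 -> 0 < e -> S <= T + e -> c * S <= c * T + e.
Proof. by move=> c01 e0 ST; have := Rmult_le_compat_l _ _ _ (proj1 c01) ST; nra. Qed.

(* The normalizations [1/n] and [1/(2n)] lie in [[0, 1]] (with [/ 0 = 0]). *)
Lemma inv_le1 x : x = 0 \/ 1 <= x -> 0 <= / x <= 1.
Proof.
case=> [-> | x1]; first by rewrite Rinv_0; lra.
by split; [apply/Rlt_le/Rinv_0_lt_compat; lra | rewrite -Rinv_1; apply: Rinv_le_contravar; lra].
Qed.

Lemma INR_0_or_ge1 n : INR n = 0 \/ 1 <= INR n.
Proof. by case: n => [|n]; [left | right; apply: (le_INR 1); lia]. Qed.

Lemma small_perturbation e K : 0 < e -> 0 <= K ->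
  exists delta, 0 < delta <= 1 /\ delta * K <= e.
Proof.
move=> e0 K0; exists (Rmin 1 (e / (K + 1))); split.
  by split; [apply: Rmin_glb_lt; [lra | apply: Rdiv_lt_0_compat; lra] | apply: Rmin_l].
have := Rmin_r 1 (e / (K + 1)); have : e / (K + 1) * (K + 1) = e by field; lra.
nra.
Qed.

Lemma sumR_perturbed_products n (p q : 'I_n -> R) delta :
  (forall i, 0 <= p i) -> (forall i, 0 <= q i) -> 0 <= delta <= 1 ->
  sumR (fun i => (p i + delta) * (q i + delta)) <=
  sumR (fun i => p i * q i) + delta * (sumR p + sumR q + INR n).
Proof.
move=> p0 q0 delta01.
have -> : sumR (fun i => p i * q i) + delta * (sumR p + sumR q + INR n) =
    sumR (fun i => p i * q i + delta * (p i + q i + 1)).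
  by rewrite sumR_add -sumR_scale !sumR_add sumR_const; ring.
by apply: sumR_le => i; have := p0 i; have := q0 i; nra.
Qed.

Lemma uniform_small_eps n (P : 'I_n -> R -> Prop) :
  (forall i e e', 0 < e' <= e -> P i e -> P i e') ->
  (forall i, exists e, 0 < e /\ P i e) -> exists e, 0 < e /\ forall i, P i e.
Proof.
move=> P_mono P_ex; have [e e_spec] := functional_choice _ P_ex.
have min_pos : 0 < \big[Rmin/1]_(i < n) e i.
  by apply: (big_ind (fun x => 0 < x)) => [|x y|i _]; [lra | apply: Rmin_glb_lt | case: (e_spec i)].
exists (\big[Rmin/1]_(i < n) e i); split => // i.
apply: (P_mono i (e i)); last by case: (e_spec i).
split => //; apply: (@rel_term_big _ Rmin 1 (fun x y => y <= x) e); first exact: Rmin_l.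
by move=> a b c ba; apply: Rle_trans (Rmin_r c b) ba.
Qed.

Section DataBounds.

Variables (m d n : nat) (g : vec d -> ER).
Hypotheses (hA1 : penA1 g) (hA2 : penA2 g) (hA3 : penA3 g) (hA4 : penA4 g).
Variables (X : 'I_n -> vec m) (D : mat m d) (G : 'I_n -> R).
Hypothesis gbarX : forall i, gbar g (/ 2 * norm2 (X i) ^ 2) = Fin (G i).

Lemma level_ge0 i : 0 <= / 2 * norm2 (X i) ^ 2.
Proof. by apply: Rmult_le_pos; [lra | apply: pow2_ge_0]. Qed.

Lemma G_ge0 i : 0 <= G i.
Proof.
rewrite -(norm1_zero d); apply: (gbar_bound (gbarX i)).
by rewrite hA4; apply: level_ge0.
Qed.

Lemma near_optimal_codes delta : 0 < delta -> exists eps, 0 < eps /\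
  forall A, inA g eps X D A -> forall i,
    norm1 (A i) <= G i + delta /\ norm2 (subv (X i) (mulmv D (A i))) <= norm2 (X i) + delta.
Proof.
move=> delta0.
pose P i e := forall a, ER_le (g a) (Fin (/ 2 * norm2 (X i) ^ 2 + e)) -> norm1 a <= G i + delta.
have P_mono i e e' : 0 < e' <= e -> P i e -> P i e'.
  by move=> e'_e P_e a ga; apply: P_e; apply: ER_le_Fin_trans ga _; lra.
have [eps1 [eps1_0 sublevel]] := uniform_small_eps P_mono
  (fun i => sublevel_norm_right_cont hA2 hA3 (gbar_bound (gbarX i)) delta0).
pose eps := Rmin eps1 (delta * delta / 2).
have eps0 : 0 < eps by apply: Rmin_glb_lt; nra.
exists eps; split => // A optA i.
have [ga_level resid_le] := near_optimal_bounds hA1 hA4 eps0 (optA i).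
split.
  apply: sublevel; apply: ER_le_Fin_trans ga_level _.
  by have := Rmin_l eps1 (delta * delta / 2); rewrite -/eps; lra.
apply: Rle_trans resid_le _; apply: Rplus_le_compat_l.
rewrite -(sqrt_square delta); last lra.
by apply: sqrt_le_1_alt; have := Rmin_r eps1 (delta * delta / 2); rewrite -/eps; lra.
Qed.

Lemma LX_le : ER_le (LX g X D) (Fin (/ INR n * sumR (fun i => norm2 (X i) * G i))).
Proof.
apply: InfE_SupE_le => e e0.
have K0 : 0 <= sumR (fun i => norm2 (X i)) + sumR G + INR n.
  have := sumR_ge0 (fun i => norm2_ge0 (X i)); have := sumR_ge0 G_ge0; have := pos_INR n; lra.
have [delta [[delta0 delta1] deltaK]] := small_perturbation e0 K0.
have delta01 : 0 <= delta <= 1 by lra.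
have [eps [eps0 near]] := near_optimal_codes delta0.
exists eps; split => // _ [A [optA ->]].
have c01 := inv_le1 (INR_0_or_ge1 n).
apply: (ER_scale_le (proj1 c01) (dualnorm12_resid_le X D A)).
have sum_le : sumR (fun i => norm2 (subv (X i) (mulmv D (A i))) * norm1 (A i)) <=
    sumR (fun i => norm2 (X i) * G i) + e.
  apply: Rle_trans (_ : _ <= sumR (fun i => (norm2 (X i) + delta) * (G i + delta))) _.
    apply: sumR_le => i; have [A_le res_le] := near A optA i.
    by apply: Rmult_le_compat => //; [apply: norm2_ge0 | apply: norm1_ge0].
  have := sumR_perturbed_products (fun i => norm2_ge0 (X i)) G_ge0 delta01; lra.
exact: scale_with_slack.
Qed.

Lemma CX_le : ER_le (CX g X D) (Fin (/ (2 * INR n) * sumR (fun i => G i * G i))).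
Proof.
apply: InfE_SupE_le => e e0.
have K0 : 0 <= sumR G + sumR G + INR n.
  by have := sumR_ge0 G_ge0; have := pos_INR n; lra.
have [delta [[delta0 delta1] deltaK]] := small_perturbation e0 K0.
have delta01 : 0 <= delta <= 1 by lra.
have [eps [eps0 near]] := near_optimal_codes delta0.
exists eps; split => // _ [A [optA ->]] /=.
have c01 : 0 <= / (2 * INR n) <= 1.
  by apply: inv_le1; case: (INR_0_or_ge1 n) => [-> | n1]; [left; ring | right; lra].
have sum_le : sumR (fun i => norm1 (A i) ^ 2) <= sumR (fun i => G i * G i) + e.
  apply: Rle_trans (_ : _ <= sumR (fun i => (G i + delta) * (G i + delta))) _.
    apply: sumR_le => i; have [A_le _] := near A optA i; have := norm1_ge0 (A i).
    by rewrite /= Rmult_1_r => A0; apply: Rmult_le_compat.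
  have := sumR_perturbed_products G_ge0 G_ge0 delta01; lra.
exact: scale_with_slack.
Qed.

End DataBounds.

Theorem mainTheorem7 (m d n : nat) (g : vec d -> ER)
  (hA1 : penA1 g) (hA2 : penA2 g) (hA3 : penA3 g) (hA4 : penA4 g)
  (X : 'I_n -> vec m) (D : mat m d) :
  ER_le (LX g X D)
    (ER_scale (/ INR n)
       (ER_sum (fun i => ER_scale (norm2 (X i)) (gbar g (/ 2 * (norm2 (X i)) ^ 2)))))
  /\
  ER_le (CX g X D)
    (ER_scale (/ (2 * INR n))
       (ER_sum (fun i => ER_sq (gbar g (/ 2 * (norm2 (X i)) ^ 2))))).
Proof.
have [G gbarX] := functional_choice _ (fun i => gbar_finite hA3 hA4 (level_ge0 X i)).
rewrite (ER_sum_Fin (f := fun i => norm2 (X i) * G i)); last by move=> i; rewrite gbarX.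
rewrite (ER_sum_Fin (f := fun i => G i * G i)); last by move=> i; rewrite gbarX.
split; [exact: LX_le | exact: CX_le].
Qed.
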